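(* Let $0\le\alpha<n$, $0<\delta<1$, $1\le r\le\infty$, $m$ a nonnegative integer, $\tilde\alpha=m\delta+\alpha$ and $\tilde\delta\le\min\{\delta,\tilde\alpha-n/r\}$. If $w\in\mathbb{H}(r,\tilde\alpha,\tilde\delta)$, then $\tilde\delta=\tilde\alpha-n/r$.
   Context: A weight is a nonnegative locally integrable function; $w(B)=\int_Bw$; $x_B$ is the center of the ball $B$; $r'$ the conjugate exponent. For $0\le\alpha<n$, $0\le\delta\le1$, $\tilde\alpha=m\delta+\alpha$, $\tilde\delta\le\delta$, a pair $(w,v)$ belongs to $\mathbb{H}(r,\tilde\alpha,\tilde\delta)$ if for some $C$ and every ball $B$: if $1<r\le\infty$, $|B|^{(\delta-\tilde\delta)/n}\big(\int_{\mathbb{R}^n}\frac{v^{r'}(y)}{(|B|^{1/n}+|x_B-y|)^{r'(n-\tilde\alpha+\delta)}}dy\big)^{1/r'}\le C\frac{w(B)}{|B|}$; if $r=1$, $|B|^{(\delta-\tilde\delta)/n}\big\|\frac{v(\cdot)}{(|B|^{1/n}+|x_B-\cdot|)^{n-\tilde\alpha+\delta}}\big\|_\infty\le C\frac{w(B)}{|B|}$. A single weight $w$ is in the class if $(w,w)$ is. *)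

From HB Require Import structures.
From mathcomp Require Import all_boot all_order all_algebra.
From mathcomp Require Import all_classical all_reals all_analysis.
From mathcomp Require Import ess_sup_inf.
Set Implicit Arguments. Unset Strict Implicit. Unset Printing Implicit Defensive.
Import Order.TTheory GRing.Theory Num.Theory.
Import numFieldNormedType.Exports.
Local Open Scope classical_set_scope.
Local Open Scope ring_scope.

Section weights.
Context {R : realType} {n : nat}.
(* R^n is modelled by n.-tuple R, with its product (= Borel) sigma-algebra
   from the library (generated by the coordinate maps). *)
Notation Rn := (n.-tuple R).

Definition edist (x y : Rn) : R :=
  Num.sqrt (\sum_(i < n) (tnth x i - tnth y i) ^+ 2).

Definition eball (c : Rn) (rho : R) : set Rn := [set y | edist c y < rho].

Definition box (a b : Rn) : set Rn :=
  [set x | forall i : 'I_n, tnth a i <= tnth x i <= tnth b i].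

(* mu is Lebesgue measure on R^n: it gives every box its volume.
   (This characterizes Lebesgue measure uniquely on the Borel sets.) *)
Definition is_lebesgue (mu : {measure set Rn -> \bar R}) : Prop :=
  forall a b : Rn, (forall i, tnth a i <= tnth b i) ->
    mu (box a b) = (\prod_(i < n) (tnth b i - tnth a i))%:E.

Definition weight (mu : {measure set Rn -> \bar R}) (w : Rn -> R) : Prop :=
  [/\ forall x, 0 <= w x, measurable_fun setT w &
      forall c rho, 0 < rho -> mu.-integrable (eball c rho) (EFin \o w)].

Definition wmeas (mu : {measure set Rn -> \bar R}) (w : Rn -> R) (B : set Rn)
  : \bar R := (\int[mu]_(x in B) (w x)%:E)%E.

Definition conj_exp (r : \bar R) : R :=
  if r is EFin s then s / (s - 1) else 1.


Definition inH (mu : {measure set Rn -> \bar R}) (r : \bar R)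
  (talpha tdelta delta : R) (w v : Rn -> R) : Prop :=
  exists C : R, forall (c : Rn) (rho : R), 0 < rho ->
    let B := eball c rho in
    let volB := fine (mu B) in
    let g := fun y => volB `^ (n%:R^-1) + edist c y in
    let e := n%:R - talpha + delta in
    let rhs := (C%:E * wmeas mu w B * (volB^-1)%:E)%E in
    if r == 1%E then
      ((volB `^ ((delta - tdelta) / n%:R))%:E *
        ess_sup mu (fun y => (v y / g y `^ e)%:E) <= rhs)%E
    else
      let r' := conj_exp r in
      ((volB `^ ((delta - tdelta) / n%:R))%:E *
        (\int[mu]_(y in setT) ((v y `^ r') / g y `^ (r' * e))%:E) `^ (r'^-1)
        <= rhs)%E.

End weights.

Definition n_over_r {R : realType} (n : nat) (r : \bar R) : R :=
  if r is EFin s then n%:R / s else 0.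

(* Suppose the gap E := talpha - tdelta - n/r were positive and test the
   condition on the balls B of radius rho -> oo around a fixed centre.  On B the
   kernel (|B|^(1/n) + |x_B - y|)^(n - talpha + delta) is comparable to
   |B|^((n - talpha + delta)/n), and by Jensen's inequality the L^(r') norm of w
   on B is at least (w(B)/|B|) |B|^(1/r').  Since w is not a.e. zero, w(B) > 0
   for large balls, so the mean w(B)/|B| cancels from both sides and the
   condition collapses to |B|^(E/n) <= const, which fails as |B| -> oo. *)

From Pilot Require Import Defs.
From HB Require Import structures.
From mathcomp Require Import all_boot all_order all_algebra.
From mathcomp Require Import all_classical all_reals all_analysis.
From mathcomp Require Import ess_sup_inf.
From mathcomp Require Import ring lra.
From mathcomp Require Import measurable_realfun.
Import Order.TTheory GRing.Theory Num.Theory.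
Import numFieldNormedType.Exports.
Local Open Scope classical_set_scope.
Local Open Scope ring_scope.
Set Implicit Arguments. Unset Strict Implicit.

(* The analysis library also defines an [edist]. *)
Local Notation edist := Defs.edist.

Section real_powers.
Variable R : realType.

Lemma powR_ge_tangent (p t x : R) : 1 <= p -> 0 < t -> 0 <= x ->
  p * t `^ (p - 1) * x <= x `^ p + (p - 1) * t `^ p.
Proof.
move=> p1 t0 x0.
have [->|p_neq1] := eqVneq p 1.
  by rewrite subrr powRr0 powRr1 // mul0r addr0 !mul1r.
have p_gt1 : 1 < p by rewrite lt_neqAle eq_sym p_neq1 p1.
have p0 : 0 < p by lra.
have q_gt0 : 0 < p / (p - 1) by rewrite divr_gt0 //; lra.
have := @conjugate_powR R x (t `^ (p - 1)) p (p / (p - 1)) x0 (powR_ge0 _ _)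
  p0 q_gt0.
rewrite -powRrM.
have -> : (p - 1) * (p / (p - 1)) = p by field; lra.
have -> : p^-1 + (p / (p - 1))^-1 = 1 by field; lra.
move=> /(_ erefl) /(ler_wpM2l (ltW p0)).
have -> : p * (x `^ p / p + t `^ p / (p / (p - 1))) = x `^ p + (p - 1) * t `^ p.
  by field; lra.
by rewrite mulrAC mulrA.
Qed.

Lemma powR_le_between (a k x e : R) : 0 < a -> 1 <= k -> a <= x -> x <= k * a ->
  x `^ e <= k `^ `|e| * a `^ e.
Proof.
move=> a0 k1 ax xka.
have x0 : 0 < x by exact: lt_le_trans ax.
have [e0|e0] := leP 0 e.
  rewrite ger0_norm // -powRM; [|lra|exact: ltW].
  by apply: ge0_ler_powR; rewrite ?nnegrE; lra.
have powRNK y : y `^ e = (y `^ (- e))^-1 by rewrite powRN invrK.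
rewrite ltr0_norm // !powRNK.
have ka_ge1 : 1 <= k `^ (- e) by rewrite -(powRr0 k); apply: ler_powR; lra.
have ax_e : a `^ (- e) <= x `^ (- e).
  by apply: ge0_ler_powR; rewrite ?nnegrE; lra.
apply: (@le_trans _ _ ((a `^ (- e))^-1)).
  by rewrite lef_pV2 ?posrE ?powR_gt0.
by rewrite ler_peMl // invr_ge0 powR_ge0.
Qed.

Lemma powRV (x r : R) : 0 < x -> (x^-1) `^ r = (x `^ r)^-1.
Proof.
move=> x0; apply: (@mulfI _ (x `^ r)); first by rewrite gt_eqF ?powR_gt0.
by rewrite -powRM ?invr_ge0 ?ltW // mulfV ?gt_eqF // powR1 mulfV // gt_eqF ?powR_gt0.
Qed.

End real_powers.

Section jensen.
Context d (T : measurableType d) (R : realType).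
Variable mu : {measure set T -> \bar R}.
Local Open Scope ereal_scope.

(* Integrate the tangent line of [x ^ p] at the mean [t] of [f]. *)
Lemma powR_mean_le_integral (D : set T) (f : T -> R) (V t p : R) :
  measurable D -> mu D = V%:E -> (0 < V)%R -> measurable_fun D f ->
  (forall x, D x -> 0 <= f x)%R -> \int[mu]_(x in D) (f x)%:E = (t * V)%:E ->
  (0 < t)%R -> (1 <= p)%R ->
  ((t `^ p * V)%:E <= \int[mu]_(x in D) (f x `^ p)%:E).
Proof.
move=> mD muD V0 mf f0 intf t0 p1.
have p0 : (0 < p)%R by lra.
have mfp : measurable_fun D (fun x => f x `^ p)%R.
  exact: (measurableT_comp (measurable_powR p) mf).
set s := (p * t `^ (p - 1))%R.
have s0 : (0 <= s)%R by rewrite mulr_ge0 ?powR_ge0 // ltW.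
have int_tangent : (s * (t * V))%:E <=
    \int[mu]_(x in D) (f x `^ p)%:E + ((p - 1) * t `^ p * V)%:E.
  rewrite EFinM -intf -ge0_integralZl_EFin //; last exact/measurable_EFinP.
  rewrite [X in _ <= _ + X]EFinM -muD -integral_cst // -ge0_integralD //; last 3 first.
  - by move=> x _; rewrite lee_fin powR_ge0.
  - exact/measurable_EFinP.
  - by move=> x _; rewrite lee_fin mulr_ge0 ?powR_ge0 //; lra.
  apply: ge0_le_integral => //.
  - by move=> x Dx; rewrite -EFinM lee_fin mulr_ge0 ?f0.
  - exact/measurable_EFinP/measurable_funM.
  - by apply: emeasurable_funD => //; exact/measurable_EFinP.
  - by move=> x Dx; rewrite /= -EFinM -EFinD lee_fin powR_ge_tangent ?f0.
move: int_tangent.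
have -> : (s * (t * V) = p * (t `^ p * V))%R.
  by rewrite /s -(mulr_powRB1 (ltW t0) p0); ring.
have : 0 <= \int[mu]_(x in D) (f x `^ p)%:E.
  by apply: integral_ge0 => x _; rewrite lee_fin powR_ge0.
case: (\int[mu]_(x in D) _) => [i| |] //= i0; last by move=> _; exact: leey.
rewrite -EFinD !lee_fin.
have : (0 <= t `^ p * V)%R by rewrite mulr_ge0 ?powR_ge0 // ltW.
nra.
Qed.

End jensen.

Section euclidean_geometry.
Variables (R : realType) (n : nat).
Local Notation Rn := (n.-tuple R).

Lemma edist_ge0 (c y : Rn) : 0 <= edist c y.
Proof. exact: sqrtr_ge0. Qed.

Lemma measurable_edist (c : Rn) : measurable_fun setT (edist c).
Proof.
apply: (measurableT_comp (continuous_measurable_fun (@sqrt_continuous R))).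
apply: measurable_sum => i.
apply: (measurableT_comp (exprn_measurable 2)).
by apply: measurable_funB => //; exact: measurable_tnth.
Qed.

Lemma measurable_eball (c : Rn) rho : measurable (eball c rho).
Proof.
have := measurable_edist c measurableT (measurable_itv `]-oo, rho[).
rewrite setTI; congr measurable; apply/seteqP; split => y /=; rewrite /eball /= in_itv.
Qed.

Lemma measurable_box (a b : Rn) : measurable (box a b).
Proof.
have -> : box a b = \bigcap_(i in [set: 'I_n])
    ((fun y : Rn => tnth y i) @^-1` `[tnth a i, tnth b i]).
  apply/seteqP; split => y /=; first by move=> aby i _; rewrite /= in_itv /= aby.
  by move=> aby i; have := aby i I; rewrite /= in_itv.
apply: fin_bigcap_measurable; first exact: finite_finset.
move=> i _; have := measurable_tnth i measurableT (measurable_itv `[tnth a i, tnth b i]).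
by rewrite setTI.
Qed.

Definition cube (c : Rn) (h : R) : set Rn :=
  box [tuple tnth c i - h | i < n] [tuple tnth c i + h | i < n].

Lemma eball_sub_cube c rho : eball c rho `<=` cube c rho.
Proof.
move=> y; rewrite /eball /cube /box /edist /= => cy_lt i; rewrite !tnth_mktuple.
have : `|tnth c i - tnth y i| < rho.
  rewrite -sqrtr_sqr; apply: le_lt_trans cy_lt; rewrite ler_sqrt ?sumr_ge0 //.
    by rewrite (bigD1 i) //= lerDl sumr_ge0 // => j _; exact: sqr_ge0.
  by move=> j _; exact: sqr_ge0.
by rewrite ltr_norml => /andP[? ?]; apply/andP; split; lra.
Qed.

Lemma cube_sub_eball c rho : 0 < rho -> (0 < n)%N ->
  cube c (rho / (2 * n%:R)) `<=` eball c rho.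
Proof.
move=> rho0 n0 y; rewrite /eball /cube /box /edist /= => y_cube.
set h := rho / (2 * n%:R) in y_cube *.
have n_gt0 : 0 < n%:R :> R by rewrite ltr0n.
have h0 : 0 < h by rewrite divr_gt0 // mulr_gt0.
have coord_le i : (tnth c i - tnth y i) ^+ 2 <= h ^+ 2.
  have := y_cube i; rewrite !tnth_mktuple => /andP[? ?].
  rewrite -ler_sqrt ?sqr_ge0 // !sqrtr_sqr (gtr0_norm h0) ler_norml.
  by apply/andP; split; lra.
have sum_le : \sum_(j < n) (tnth c j - tnth y j) ^+ 2 <= h ^+ 2 *+ n.
  by rewrite -[in leRHS](card_ord n) -sumr_const; apply: ler_sum => j _; exact: coord_le.
have nh_lt : h ^+ 2 *+ n < rho ^+ 2.
  have -> : h ^+ 2 *+ n = rho ^+ 2 / (4 * n%:R).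
    by rewrite -mulr_natr /h; field; rewrite gt_eqF.
  rewrite ltr_pdivrMr ?mulr_gt0 // ltr_pMr ?exprn_gt0 //.
  have : 1 <= n%:R :> R by rewrite ler1n.
  lra.
rewrite -(gtr0_norm rho0) -sqrtr_sqr ltr_sqrt ?exprn_gt0 //.
exact: le_lt_trans sum_le nh_lt.
Qed.

End euclidean_geometry.

Section lebesgue_balls.
Variables (R : realType) (n : nat) (mu : {measure set (n.-tuple R) -> \bar R}).
Hypothesis mu_leb : is_lebesgue mu.

Lemma lebesgue_cube c h : 0 <= h -> mu (cube c h) = ((2 * h) ^+ n)%:E.
Proof.
move=> h0; rewrite mu_leb; last by move=> i; rewrite !tnth_mktuple; lra.
rewrite (eq_bigr (fun _ => 2 * h)) ?prodr_const ?card_ord //.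
by move=> i _; rewrite !tnth_mktuple; ring.
Qed.

Lemma lebesgue_eball_le c rho : 0 < rho ->
  (mu (eball c rho) <= ((2 * rho) ^+ n)%:E)%E.
Proof.
move=> rho0; rewrite -(lebesgue_cube c (ltW rho0)).
apply: le_measure; rewrite ?inE; [exact: measurable_eball|exact: measurable_box|].
exact: eball_sub_cube.
Qed.

Lemma lebesgue_eball_ge c rho : 0 < rho -> (0 < n)%N ->
  (((rho / n%:R) ^+ n)%:E <= mu (eball c rho))%E.
Proof.
move=> rho0 n0; have n_gt0 : 0 < n%:R :> R by rewrite ltr0n.
have -> : rho / n%:R = 2 * (rho / (2 * n%:R)) by field; rewrite gt_eqF.
rewrite -(lebesgue_cube c); last by rewrite ltW // divr_gt0 // mulr_gt0.
apply: le_measure; rewrite ?inE; [exact: measurable_box|exact: measurable_eball|].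
exact: cube_sub_eball.
Qed.

End lebesgue_balls.

Lemma lee_cancel_mean (R : realType) (x y C W V : R) (X : \bar R) :
  0 <= x -> 0 < W -> 0 < V -> ((W / V * y)%:E <= X)%E ->
  (x%:E * X <= C%:E * W%:E * (V^-1)%:E)%E -> x * y <= C.
Proof.
move=> x0 W0 V0 yX; have x0E : (0 <= x%:E)%E by rewrite lee_fin.
move=> /(le_trans (lee_wpmul2l x0E yX)).
rewrite -!EFinM lee_fin.
have -> : x * (W / V * y) = W / V * (x * y) by ring.
have -> : C * W * V^-1 = W / V * C by ring.
by rewrite ler_pM2l // divr_gt0.
Qed.

Lemma conj_exp_ge1 (R : realType) (r : \bar R) :
  (1 <= r)%E -> r != 1%E -> 1 <= conj_exp r.
Proof.
case: r => [s| |] //=; rewrite lee_fin => s_ge1 s_neq1.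
have s_gt1 : 1 < s by rewrite lt_neqAle s_ge1 andbT eq_sym; apply: contraNneq s_neq1 => ->.
by rewrite ler_pdivlMr ?mul1r; lra.
Qed.

Lemma natr_div_conj_exp (R : realType) (n : nat) (r : \bar R) :
  (1 <= r)%E -> r != 1%E -> n%:R / conj_exp r = n%:R - n_over_r n r.
Proof.
case: r => [s| |] //=; last by rewrite divr1 subr0.
rewrite lee_fin => s_ge1 s_neq1.
have s_gt1 : 1 < s by rewrite lt_neqAle s_ge1 andbT eq_sym; apply: contraNneq s_neq1 => ->.
by rewrite invf_div; field; lra.
Qed.

Section balls.
Variables (R : realType) (n : nat) (mu : {measure set (n.-tuple R) -> \bar R}).
Hypotheses (mu_leb : is_lebesgue mu) (n_gt0 : (0 < n)%N).
Variable c : n.-tuple R.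

Definition vol rho := fine (mu (eball c rho)).
Definition vol_root rho := vol rho `^ n%:R^-1.
Definition denom_bound e rho := (1 + n%:R) `^ `|e| * vol_root rho `^ e.

Let nR_gt0 : 0 < n%:R :> R. Proof. by rewrite ltr0n. Qed.

Lemma volE rho : 0 < rho -> mu (eball c rho) = (vol rho)%:E.
Proof.
move=> rho0; rewrite /vol fineK // ge0_fin_numE; last exact: measure_ge0.
exact: le_lt_trans (lebesgue_eball_le mu_leb c rho0) (ltry _).
Qed.

Lemma vol_ge rho : 0 < rho -> (rho / n%:R) ^+ n <= vol rho.
Proof. by move=> rho0; rewrite -lee_fin -volE //; exact: lebesgue_eball_ge. Qed.

Lemma vol_gt0 rho : 0 < rho -> 0 < vol rho.
Proof. by move=> rho0; apply: lt_le_trans (vol_ge rho0); rewrite exprn_gt0 ?divr_gt0. Qed.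

Lemma vol_root_ge rho : 0 < rho -> rho / n%:R <= vol_root rho.
Proof.
move=> rho0; have rho_n0 : 0 <= rho / n%:R by rewrite ltW ?divr_gt0.
have -> : rho / n%:R = ((rho / n%:R) ^+ n) `^ n%:R^-1.
  by rewrite -powR_mulrn // -powRrM mulfV ?powRr1 // lt0r_neq0.
apply: ge0_ler_powR; first by rewrite invr_ge0 ltW.
- by rewrite nnegrE exprn_ge0.
- by rewrite nnegrE ltW ?vol_gt0.
- exact: vol_ge.
Qed.

Lemma vol_root_gt0 rho : 0 < rho -> 0 < vol_root rho.
Proof. by move=> rho0; apply: lt_le_trans (vol_root_ge rho0); rewrite divr_gt0. Qed.

Lemma vol_powR rho x : vol rho `^ x = vol_root rho `^ (n%:R * x).
Proof. by rewrite /vol_root -powRrM mulrA mulVf ?gt_eqF // mul1r. Qed.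

Lemma vol_root_powR_unbounded (E D rho0 : R) : 0 < rho0 -> 0 < E ->
  exists rho, rho0 <= rho /\ D < vol_root rho `^ E.
Proof.
move=> rho0_gt0 E0; set X := (`|D| + 1) `^ E^-1.
exists (rho0 + n%:R * X); have X0 : 0 <= X := powR_ge0 _ _.
have rho0_le : rho0 <= rho0 + n%:R * X by rewrite lerDl; exact: mulr_ge0 (ltW _) X0.
split=> //; have rho_gt0 := lt_le_trans rho0_gt0 rho0_le.
have X_le : X <= vol_root (rho0 + n%:R * X).
  apply: le_trans (vol_root_ge rho_gt0).
  by rewrite ler_pdivlMr // [X * _]mulrC lerDr ltW.
apply: lt_le_trans (ge0_ler_powR (ltW E0) _ _ X_le); rewrite ?nnegrE ?X0 ?ltW ?vol_root_gt0 //.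
rewrite /X -powRrM mulVf ?gt_eqF // powRr1 ?addr_ge0 //.
by have := ler_norm D; lra.
Qed.

Lemma powR_denom_le rho y e : 0 < rho -> eball c rho y ->
  (vol_root rho + edist c y) `^ e <= denom_bound e rho.
Proof.
move=> rho0 cy_lt; have a0 := vol_root_gt0 rho0.
apply: powR_le_between => //; rewrite ?lerDl ?edist_ge0 //.
have : rho <= n%:R * vol_root rho by rewrite mulrC -ler_pdivrMr // vol_root_ge.
by move: cy_lt; rewrite /eball /=; lra.
Qed.

Lemma denom_bound_gt0 e rho : 0 < rho -> 0 < denom_bound e rho.
Proof. by move=> rho0; rewrite mulr_gt0 // powR_gt0 ?vol_root_gt0 //; lra. Qed.

End balls.

Section weighted_balls.
Variables (R : realType) (n : nat) (mu : {measure set (n.-tuple R) -> \bar R}).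
Hypotheses (mu_leb : is_lebesgue mu) (n_gt0 : (0 < n)%N).
Variable c : n.-tuple R.
Variable w : n.-tuple R -> R.
Hypothesis w_weight : weight mu w.

Local Notation vol := (vol mu c).
Local Notation vol_root := (vol_root mu c).
Local Notation denom_bound := (denom_bound mu c).

Definition mass rho := fine (wmeas mu w (eball c rho)).
Definition mean rho := mass rho / vol rho.

Let w_ge0 x : 0 <= w x. Proof. by case: w_weight. Qed.
Let measurable_w : measurable_fun setT w. Proof. by case: w_weight. Qed.

Lemma massE rho : 0 < rho -> wmeas mu w (eball c rho) = (mass rho)%:E.
Proof.
move=> rho0; case: w_weight => _ _ /(_ c rho rho0) /integrableP[_ w_int].
rewrite /mass fineK // ge0_fin_numE; last by apply: integral_ge0 => x _; rewrite lee_fin.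
apply: le_lt_trans w_int; apply: ge0_le_integral.
- exact: measurable_eball.
- by move=> x _ /=; rewrite lee_fin.
- by apply/measurable_EFinP; exact: measurable_funS measurable_w.
- by apply/measurable_EFinP/measurableT_comp => //; exact: measurable_funS measurable_w.
- by move=> x _ /=; rewrite lee_fin ler_norm.
Qed.

Lemma ae_eq0_of_wmeas_eball_eq0 :
  (forall rho, 0 < rho -> wmeas mu w (eball c rho) = 0%E) ->
  \forall x \ae mu, w x = 0.
Proof.
move=> wB0.
have negl k : mu.-negligible
    (~` [set x | eball c k.+1%:R x -> (EFin \o w) x = cst 0%E x]).
  apply: (ae_eq_integral_abs mu (measurable_eball c k.+1%:R) _).1.
    by apply/measurable_EFinP; exact: measurable_funS measurable_w.
  under eq_integral do rewrite /= ger0_norm //.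
  exact: wB0.
apply: negligibleS (negligible_bigcup negl) => x /= wx_neq0.
exists (Num.truncn (edist c x)) => //= /(_ (truncnS_gt _)) [].
exact: wx_neq0.
Qed.

Lemma mass_gt0_eventually : ~ (\forall x \ae mu, w x = 0) ->
  exists rho0, 0 < rho0 /\ forall rho, rho0 <= rho -> 0 < mass rho.
Proof.
move=> w_neq0.
have [rho0 [rho0_gt0 W0]] : exists rho0, 0 < rho0 /\ (0 < wmeas mu w (eball c rho0))%E.
  apply: contrapT => no_pos; apply/w_neq0/ae_eq0_of_wmeas_eball_eq0 => rho rho0.
  apply/eqP; rewrite eq_le integral_ge0 ?andbT => [|x _]; last by rewrite lee_fin.
  by rewrite leNgt; apply/negP => W0; apply: no_pos; exists rho.
exists rho0; split=> // rho rho0_le; rewrite -lte_fin -massE ?(lt_le_trans rho0_gt0) //.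
apply: lt_le_trans W0 _; apply: ge0_subset_integral; try exact: measurable_eball.
- by apply/measurable_EFinP; exact: measurable_funS measurable_w.
- by move=> x _ /=; rewrite lee_fin.
- by move=> y; rewrite /eball /= => /lt_le_trans; exact.
Qed.

Lemma integral_eball_powR_ge (e p rho : R) : 0 < rho -> 1 <= p -> 0 < mass rho ->
  (((mean rho / denom_bound e rho) `^ p * vol rho)%:E <=
   \int[mu]_(y in eball c rho) ((w y / denom_bound e rho) `^ p)%:E)%E.
Proof.
move=> rho0 p1 W0; set G := denom_bound e rho.
have V0 := vol_gt0 mu_leb n_gt0 c rho0; have G0 := denom_bound_gt0 mu_leb n_gt0 c e rho0.
apply: powR_mean_le_integral => //; first exact: measurable_eball.
- exact: volE.
- have measurable_wG : measurable_fun setT (fun y => w y / G) by exact: measurable_funM.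
  exact: measurable_funS measurable_wG.
- by move=> y _; rewrite divr_ge0 // ltW.
- have -> : mean rho / G * vol rho = mass rho * G^-1.
    by rewrite /mean; field; rewrite ?gt_eqF.
  under eq_integral do rewrite EFinM.
  rewrite ge0_integralZr; first by rewrite -[X in (X * _)%E]/(wmeas mu w _) massE.
  + exact: measurable_eball.
  + by apply/measurable_EFinP; exact: measurable_funS measurable_w.
  + by move=> y _; rewrite lee_fin.
  + by rewrite lee_fin invr_ge0 ltW.
- by rewrite !divr_gt0.
Qed.

Lemma integral_term_powR_ge (e p rho : R) : 0 < rho -> 1 <= p -> 0 < mass rho ->
  (((mean rho / denom_bound e rho) `^ p * vol rho)%:E <=
   \int[mu]_(y in setT) (w y `^ p / (vol_root rho + edist c y) `^ (p * e))%:E)%E.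
Proof.
move=> rho0 p1 W0; set G := denom_bound e rho; set a := vol_root rho.
have G0 := denom_bound_gt0 mu_leb n_gt0 c e rho0.
have a0 := vol_root_gt0 mu_leb n_gt0 c rho0.
have p0 : 0 < p by lra.
have measurable_integrand :
    measurable_fun setT (fun y => w y `^ p / (a + edist c y) `^ (p * e)).
  have -> : (fun y => w y `^ p / (a + edist c y) `^ (p * e)) =
      (fun y => w y `^ p * (a + edist c y) `^ (- (p * e))).
    by apply/funext => y; rewrite powRN.
  apply: measurable_funM; first exact: measurableT_comp (measurable_powR p) _.
  apply: measurableT_comp (measurable_powR _) _.
  by apply: measurable_funD => //; exact: measurable_edist.
apply: (le_trans (integral_eball_powR_ge e rho0 p1 W0)).
apply: le_trans (ge0_subset_integral _ _ _ _ _ _); last 5 first.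
- exact: measurable_eball.
- exact: measurableT.
- exact/measurable_EFinP.
- by move=> y _; rewrite lee_fin divr_ge0 ?powR_ge0.
- by [].
apply: ge0_le_integral; first exact: measurable_eball.
- by move=> y _; rewrite lee_fin powR_ge0.
- have measurable_wG : measurable_fun setT (fun y => w y / G) by exact: measurable_funM.
  apply/measurable_EFinP.
  exact: measurable_funS (measurableT_comp (measurable_powR p) measurable_wG).
- by apply/measurable_EFinP; exact: measurable_funS measurable_integrand.
move=> y By; rewrite lee_fin powRM ?w_ge0 ?invr_ge0 ?(ltW G0) // powRV //.
rewrite [p * e]mulrC powRrM; apply: ler_wpM2l; first exact: powR_ge0.
rewrite lef_pV2 ?posrE ?powR_gt0 ?ltr_pwDl ?edist_ge0 //.
apply: ge0_ler_powR; rewrite ?nnegrE ?powR_ge0 ?(ltW p0) ?(ltW G0) //.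
exact: powR_denom_le.
Qed.

Lemma integral_term_ge (e p rho : R) : 0 < rho -> 1 <= p -> 0 < mass rho ->
  ((mean rho * (vol rho `^ p^-1 / denom_bound e rho))%:E <=
   (\int[mu]_(y in setT) (w y `^ p / (vol_root rho + edist c y) `^ (p * e))%:E) `^ p^-1)%E.
Proof.
move=> rho0 p1 W0; have V0 := vol_gt0 mu_leb n_gt0 c rho0.
have G0 := denom_bound_gt0 mu_leb n_gt0 c e rho0.
have t0 : 0 < mean rho / denom_bound e rho by rewrite !divr_gt0.
have p0 : 0 < p by lra.
have J_ge := integral_term_powR_ge e rho0 p1 W0.
apply: le_trans (gt0_ler_poweR _ _ _ J_ge); rewrite ?in_itv /= ?leey ?andbT.
- rewrite lee_fin powRM ?powR_ge0 ?(ltW V0) // -powRrM mulfV ?gt_eqF // powRr1 ?(ltW t0) //.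
  by rewrite mulrA mulrAC.
- by rewrite invr_ge0 ltW.
- by rewrite lee_fin mulr_ge0 ?powR_ge0 ?(ltW V0).
- by apply: le_trans J_ge; rewrite lee_fin mulr_ge0 ?powR_ge0 ?(ltW V0).
Qed.

Lemma ess_sup_term_ge (e rho : R) : 0 < rho -> 0 < mass rho ->
  ((mean rho / denom_bound e rho)%:E <=
   ess_sup mu (fun y => (w y / (vol_root rho + edist c y) `^ e)%:E))%E.
Proof.
move=> rho0 W0.
set V := vol rho; set W := mass rho; set G := denom_bound e rho; set a := vol_root rho.
have V0 : 0 < V := vol_gt0 mu_leb n_gt0 c rho0.
have G0 : 0 < G := denom_bound_gt0 mu_leb n_gt0 c e rho0.
have a0 : 0 < a := vol_root_gt0 mu_leb n_gt0 c rho0.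
have g0 y : 0 < (a + edist c y) `^ e by rewrite powR_gt0 // ltr_pwDl ?edist_ge0.
have mu_gt0 : (0 < mu setT)%E.
  have : (0 < mu (eball c rho))%E by rewrite (volE mu_leb c rho0) lte_fin.
  move/lt_le_trans; apply; apply: le_measure; rewrite ?inE //.
  exact: measurable_eball.
have := ess_sup_ge mu (fun y => (w y / (a + edist c y) `^ e)%:E).
have : (0 <= ess_sup mu (fun y => (w y / (a + edist c y) `^ e)%:E))%E.
  by apply: ess_sup_ger => // y; rewrite lee_fin divr_ge0 ?powR_ge0.
case: ess_sup => [M| |] //= M0 w_le_M; last by rewrite leey.
rewrite lee_fin in M0.
have W_le : (W%:E <= (M * G)%:E * V%:E)%E.
  rewrite -(volE mu_leb c rho0) -integral_cst; last exact: measurable_eball.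
  rewrite -massE //; apply: ae_ge0_le_integral; first exact: measurable_eball.
  - by move=> y _; rewrite lee_fin.
  - by apply/measurable_EFinP; exact: measurable_funS measurable_w.
  - by move=> y _; rewrite lee_fin mulr_ge0 // ltW.
  - exact: measurable_cst.
  apply: filterS w_le_M => y; rewrite lee_fin => wy_le By.
  rewrite lee_fin -[w y](divfK (lt0r_neq0 (g0 y))).
  apply: ler_pM; rewrite ?divr_ge0 ?powR_ge0 //.
  exact: powR_denom_le.
by move: W_le; rewrite -EFinM !lee_fin /mean !ler_pdivrMr.
Qed.

Lemma inH_vol_root_powR_bounded (r : \bar R) (ta tdelta delta : R) : (1 <= r)%E ->
  inH mu r ta tdelta delta w w ->
  exists D, forall rho, 0 < rho -> 0 < mass rho ->
    vol_root rho `^ (ta - tdelta - n_over_r n r) <= D.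
Proof.
move=> r_ge1 [C HC]; set e := n%:R - ta + delta; set E := ta - tdelta - n_over_r n r.
exists (C * (1 + n%:R) `^ `|e|) => rho rho0 W0.
have V0 := vol_gt0 mu_leb n_gt0 c rho0; have a0 := vol_root_gt0 mu_leb n_gt0 c rho0.
have G0 := denom_bound_gt0 mu_leb n_gt0 c e rho0.
set A := (delta - tdelta) / n%:R.
have nR_neq0 : n%:R != 0 :> R by rewrite pnatr_eq0 -lt0n.
suff bound s : n%:R * A + n%:R * s = E + e ->
    vol rho `^ A * (vol rho `^ s / denom_bound e rho) <= C ->
    vol_root rho `^ E <= C * (1 + n%:R) `^ `|e|.
  have := HC c rho rho0; rewrite /=; case: ifPn => [/eqP r_eq1 | r_neq1] H.
  - apply: (bound 0); first by rewrite /E /e /A r_eq1 /=; field.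
    rewrite powRr0 div1r.
    apply: lee_cancel_mean (powR_ge0 _ _) W0 V0 (ess_sup_term_ge e rho0 W0) _.
    by rewrite -massE.
  - have p_ge1 := conj_exp_ge1 r_ge1 r_neq1.
    apply: (bound (conj_exp r)^-1).
      by rewrite (natr_div_conj_exp n r_ge1 r_neq1) /E /e /A; field.
    apply: lee_cancel_mean (powR_ge0 _ _) W0 V0 (integral_term_ge _ rho0 p_ge1 W0) _.
    by rewrite -massE.
move=> exponents_eq le_C.
have : vol_root rho `^ (E + e) <= C * (1 + n%:R) `^ `|e| * vol_root rho `^ e.
  rewrite -exponents_eq powRD ?(negbTE (lt0r_neq0 a0)) ?implybT //.
  by rewrite -!vol_powR; move: le_C; rewrite mulrA ler_pdivrMr // /denom_bound mulrA.
by rewrite powRD ?(negbTE (lt0r_neq0 a0)) ?implybT // ler_pM2r ?powR_gt0.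
Qed.

End weighted_balls.

Unset Implicit Arguments.
Set Strict Implicit.

Theorem lemma2p4 (R : realType) (n : nat)
  (mu : {measure set (n.-tuple R) -> \bar R})
  (alpha delta : R) (m : nat) (r : \bar R) (tdelta : R)
  (w : n.-tuple R -> R) :
  is_lebesgue mu ->
  0 <= alpha -> alpha < n%:R ->
  0 < delta -> delta < 1 ->
  (1 <= r)%E ->
  tdelta <= Num.min delta ((m%:R * delta + alpha) - n_over_r n r) ->
  weight mu w ->
  ~ (\forall x \ae mu, w x = 0) ->
  inH mu r (m%:R * delta + alpha) tdelta delta w w ->
  tdelta = (m%:R * delta + alpha) - n_over_r n r.
Proof.
move=> mu_leb alpha_ge0 alpha_lt_n _ _ r_ge1 tdelta_le w_weight w_neq0 w_inH.
have n_gt0 : (0 < n)%N by rewrite -(ltr0n R); exact: le_lt_trans alpha_lt_n.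
move: tdelta_le; rewrite le_min => /andP[_ tdelta_le].
apply/eqP; rewrite eq_le tdelta_le leNgt; apply/negP => tdelta_lt.
pose c : n.-tuple R := [tuple 0 | _ < n].
have [rho0 [rho0_gt0 mass_gt0]] := mass_gt0_eventually c w_weight w_neq0.
have [D vol_root_bounded] := inH_vol_root_powR_bounded mu_leb n_gt0 c w_weight r_ge1 w_inH.
have [rho [rho0_le D_lt]] : exists rho, rho0 <= rho /\
    D < vol_root mu c rho `^ ((m%:R * delta + alpha) - tdelta - n_over_r n r).
  by apply: vol_root_powR_unbounded => //; lra.
have rho_gt0 := lt_le_trans rho0_gt0 rho0_le.
by have := vol_root_bounded rho rho_gt0 (mass_gt0 rho rho0_le); rewrite leNgt D_lt.
Qed.
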